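(* Consider the mechanism $\mathcal{M}_{sCA}$ for the $s$-CA problem, run under best-response dynamics with random player order in which every agent starts with the empty declaration, an agent chosen for update who cannot improve his utility keeps his previous declaration, and agents play undominated strategies (single-minded declarations $(S_i,t_i(S_i))$). Then at every step of the dynamics the submitted declaration profile is separated.
   Context: $s$-CA problem: $n$ agents, a set $M$ of $m$ items; an allocation is feasible if the allocated sets are pairwise disjoint and each has at most $s$ items. Agent $i$ has a private monotone valuation $t_i$ with $t_i(\emptyset)=0$. A single-minded declaration $(S,x)$ assigns $x$ to supersets of $S$ and $0$ otherwise. Mechanism $\mathcal{M}_{sCA}$: (1) replace each declaration $d_i$ by $(S_i,d_i(S_i))$ with $S_i\in\arg\max_S d_i(S)$ (ties to smaller sets); (2) run the greedy algorithm $\mathcal{A}_{sCA}$, which considers the declared sets in decreasing order of declared value and allocates a set of size at most $s$ to its bidder if it is disjoint from all previously allocated sets, obtaining tentative sets $T_1,\dots,T_n$; (3) for each $i$ with $T_i\ne\emptyset$, let $p_i=\sum_{j\ne i:\,S_j\cap T_i\ne\emptyset}d_j(S_j)$, and if $d_i(T_i)\le p_i$ set $T_i=\emptyset$; (4) allocate $T_1,\dots,T_n$ and charge each winner the critical price under this mechanism, i.e. the infimum value he could declare for his set and still receive it. Utility = true value minus payment. For a profile $\mathbf{d}$ of single-minded declarations $(S_j,d_j(S_j))$ and a set $T$, $R_i(\mathbf{d},T)=\{j\ne i: S_j\cap T\ne\emptyset\}$ and $Q_i(\mathbf{d},T)=\{j\in R_i(\mathbf{d},T): d_j(S_j)<t_i(T)\}$.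 $\mathbf{d}$ is separated for agent $i$ if $\sum_{j\in Q_i(\mathbf{d},S_i)}d_j(S_j)\le d_i(S_i)$, and separated if it is separated for every agent. Best-response dynamics with random player order: at each step one uniformly random agent may switch to a utility-maximizing declaration given the others' current declarations. *)

From HB Require Import structures.
From mathcomp Require Import all_boot all_order all_algebra.
From mathcomp Require Import reals.
From mathcomp Require classical_sets.
Set Implicit Arguments. Unset Strict Implicit. Unset Printing Implicit Defensive.
Import Order.TTheory GRing.Theory Num.Theory.
Local Open Scope ring_scope.

Section SCA.
Variables (R : realType) (n m s : nat).

(* a single-minded declaration (S, x): value x on supersets of S, 0 otherwise *)
Definition decl := ({set 'I_m} * R)%type.
Definition profile := 'I_n -> decl.
Definition valuations := 'I_n -> {set 'I_m} -> R.

Definition sm_value (dc : decl) (T : {set 'I_m}) : R :=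
  if dc.1 \subset T then dc.2 else 0.

(* Step (1): a set in argmax of the declared valuation, ties broken towards
   smaller sets: S if x > 0, and the empty set otherwise. *)
Definition norm_set (dc : decl) : {set 'I_m} :=
  if dc.2 <= 0 then set0 else dc.1.

Definition upd (d : profile) (i : 'I_n) (dc : decl) : profile :=
  fun j => if j == i then dc else d j.

Definition prec (d : profile) (i j : 'I_n) : bool :=
  ((d j).2 < (d i).2) || (((d i).2 == (d j).2) && (i <= j)%N).

Fixpoint greedy_run (d : profile) (ord : seq 'I_n) (used : {set 'I_m})
  : {set 'I_n} :=
  match ord with
  | [::] => set0
  | i :: o =>
      if (#|norm_set (d i)| <= s)%N && [disjoint norm_set (d i) & used]
      then i |: greedy_run d o (norm_set (d i) :|: used)
      else greedy_run d o used
  end.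

Definition tentative (d : profile) (i : 'I_n) : {set 'I_m} :=
  if i \in greedy_run d (sort (prec d) (enum 'I_n)) set0
  then norm_set (d i) else set0.

Definition p3 (d : profile) (i : 'I_n) : R :=
  \sum_(j | (j != i) && (norm_set (d j) :&: tentative d i != set0))
     (d j).2.

Definition final_alloc (d : profile) (i : 'I_n) : {set 'I_m} :=
  if (tentative d i != set0) && (sm_value (d i) (tentative d i) <= p3 d i)
  then set0 else tentative d i.

Definition critical_price (d : profile) (i : 'I_n) : R :=
  inf (fun y : R => final_alloc (upd d i (final_alloc d i, y)) i
                   = final_alloc d i).

Definition payment (d : profile) (i : 'I_n) : R :=
  if final_alloc d i != set0 then critical_price d i else 0.

Definition utility (t : valuations) (d : profile) (i : 'I_n) : R :=
  t i (final_alloc d i) - payment d i.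

Definition undom (t : valuations) (i : 'I_n) (S : {set 'I_m}) : decl :=
  (S, t i S).

Definition improvable (t : valuations) (i : 'I_n) (d : profile) : Prop :=
  exists S, utility t (upd d i (undom t i S)) i > utility t d i.

Definition br_step (t : valuations) (i : 'I_n) (d d' : profile) : Prop :=
  (improvable t i d /\
     exists S, d' = upd d i (undom t i S) /\
       forall S', utility t (upd d i (undom t i S')) i
                  <= utility t (upd d i (undom t i S)) i)
  \/ (~ improvable t i d /\ d' = d).

Definition empty_profile : profile := fun _ => (set0, 0).

(* profiles occurring at some step of the dynamics, for some realization of
   the random order of players *)
Inductive reachable (t : valuations) : profile -> Prop :=
  | reach_init : reachable t empty_profile
  | reach_step i d d' : reachable t d -> br_step t i d d' -> reachable t d'.

Definition Rset (d : profile) (i : 'I_n) (T : {set 'I_m}) : {set 'I_n} :=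
  [set j | (j != i) && ((d j).1 :&: T != set0)].

Definition Qset (t : valuations) (d : profile) (i : 'I_n) (T : {set 'I_m})
  : {set 'I_n} :=
  [set j in Rset d i T | (d j).2 < t i T].

Definition separated_for (t : valuations) (d : profile) (i : 'I_n) : Prop :=
  \sum_(j in Qset t d i (d i).1) (d j).2 <= (d i).2.

Definition separated (t : valuations) (d : profile) : Prop :=
  forall i, separated_for t d i.

End SCA.

(* Along the dynamics every declaration is truthful, (S_j, t_j(S_j)), so all
   declared values are nonnegative and a winner's utility is nonnegative.
   An agent who switches therefore strictly gains, hence wins; winning forces
   p_k < d_k, which bounds his own Q-sum. For any other agent i the new
   declaration of k cannot enter Q_i: it would meet S_i with a value below
   t_i(S_i) = d_i, so d_i would be a summand of p_k, and
   d_i <= p_k < d_k < d_i.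
   The sets Q_i of the others thus only shrink. *)
From HB Require Import structures.
From mathcomp Require Import all_boot all_order all_algebra.
From mathcomp Require Import reals.
From mathcomp Require classical_sets.
From Stdlib Require Import FunctionalExtensionality.
Set Implicit Arguments.
Unset Strict Implicit.
Unset Printing Implicit Defensive.
Import Order.TTheory GRing.Theory Num.Theory.
Local Open Scope ring_scope.

Section Mechanism.
Variables (R : realType) (n m s : nat).
Implicit Types (d : profile R n m) (i j k : 'I_n).

Lemma upd_id d k : upd d k (d k) = d.
Proof.
by apply: functional_extensionality => j; rewrite /upd; case: eqP => // ->.
Qed.

Lemma upd_eq d k dc : upd d k dc k = dc.
Proof. by rewrite /upd eqxx. Qed.

Lemma upd_neq d k dc j : j != k -> upd d k dc j = d j.
Proof. by rewrite /upd => /negbTE ->. Qed.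

Lemma tentative_neq0 d k :
  tentative s d k != set0 -> tentative s d k = (d k).1 /\ 0 < (d k).2.
Proof.
rewrite /tentative /norm_set; case: ifP => _; last by rewrite eqxx.
by case: leP => [_|]; [rewrite eqxx | split].
Qed.

Lemma final_alloc_neq0 d k : final_alloc s d k != set0 ->
  [/\ final_alloc s d k = (d k).1, tentative s d k = (d k).1,
      0 < (d k).2 & p3 s d k < (d k).2].
Proof.
rewrite /final_alloc; case: ifP => [_|/negbT]; first by rewrite eqxx.
move=> not_rejected /[dup] tent_neq0 /tentative_neq0 [tent_k pos_k].
move: not_rejected; rewrite tent_neq0 /= -ltNge tent_k /sm_value subxx.
by split.
Qed.

Lemma final_alloc_nonpos d k : (d k).2 <= 0 -> final_alloc s d k = set0.
Proof.
move=> nonpos_k; apply/eqP/negP => /negP /final_alloc_neq0 [_ _ pos_k _].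
by move: (lt_le_trans pos_k nonpos_k); rewrite ltxx.
Qed.

(* The price is an infimum over values that keep the allocation; all of them
   are positive, and the declared value is one of them. *)
Lemma critical_price_le d k :
  final_alloc s d k != set0 -> critical_price s d k <= (d k).2.
Proof.
move=> /[dup] win /final_alloc_neq0 [alloc_k _ _ _].
rewrite /critical_price alloc_k; apply: ge_inf; last first.
  by rewrite /= -surjective_pairing upd_id alloc_k.
exists 0 => y keeps; rewrite leNgt; apply/negP => /ltW nonpos_y.
move: keeps; rewrite final_alloc_nonpos ?upd_eq // => alloc0.
by move: win; rewrite alloc_k -alloc0 eqxx.
Qed.

Lemma p3_ge_rival d k j : (forall l, 0 <= (d l).2) ->
  j != k -> norm_set (d j) :&: tentative s d k != set0 -> (d j).2 <= p3 s d k.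
Proof.
move=> nonneg j_k meets; rewrite /p3 (bigD1 j) /=; last by rewrite j_k meets.
by rewrite lerDl sumr_ge0.
Qed.

Lemma sum_Qset_le_p3 (t : valuations R n m) d k :
  (forall l, 0 <= (d l).2) -> tentative s d k = (d k).1 ->
  \sum_(j in Qset t d k (d k).1) (d j).2 <= p3 s d k.
Proof.
move=> nonneg tent_k; rewrite /p3 tent_k.
rewrite [X in _ <= X]big_mkcond [X in X <= _]big_mkcond.
apply: ler_sum => j _; rewrite /Qset /Rset !inE.
case: (j != k) => //=; case: ifP => [/andP[meets _]|_]; last first.
  by case: ifP => // _; apply: nonneg.
rewrite /norm_set; case: (leP (d j).2 0) => [nonpos_j|_]; last by rewrite meets.
by rewrite set0I eqxx.
Qed.

End Mechanism.

Section Dynamics.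
Variables (R : realType) (n m s : nat) (t : valuations R n m).
Hypothesis t_empty : forall i, t i set0 = 0.
Hypothesis t_mono : forall i (A B : {set 'I_m}), A \subset B -> t i A <= t i B.
Implicit Types (d : profile R n m) (i j k : 'I_n).

Definition truthful d := forall j, (d j).2 = t j (d j).1.

Lemma t_ge0 i A : 0 <= t i A.
Proof. by rewrite -(t_empty i) t_mono ?sub0set. Qed.

Lemma truthful_ge0 d : truthful d -> forall j, 0 <= (d j).2.
Proof. by move=> tr j; rewrite tr t_ge0. Qed.

Lemma truthful_empty : truthful (empty_profile R m).
Proof. by move=> j; rewrite t_empty. Qed.

Lemma truthful_upd d k S : truthful d -> truthful (upd d k (undom t k S)).
Proof. by move=> tr j; rewrite /upd; case: eqP => [->|_]. Qed.

Lemma utility_ge0 d k : truthful d -> 0 <= utility s t d k.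
Proof.
move=> tr; rewrite /utility /payment; case: ifP => [win|/negbFE/eqP->].
  have [-> _ _ _] := final_alloc_neq0 win.
  by rewrite subr_ge0 -tr critical_price_le.
by rewrite t_empty subr0.
Qed.

Lemma utility_gt0_win d k : 0 < utility s t d k -> final_alloc s d k != set0.
Proof.
apply: contraTneq => alloc0.
by rewrite /utility /payment alloc0 eqxx t_empty subr0 ltxx.
Qed.

Lemma winner_notin_Qset d k i : truthful d -> i != k ->
  final_alloc s d k != set0 -> k \notin Qset t d i (d i).1.
Proof.
move=> tr i_k /final_alloc_neq0 [_ tent_k pos_k p3_lt].
rewrite /Qset /Rset !inE eq_sym i_k -tr /=; apply/negP => /andP[meets lt_ki].
have pos_i : 0 < (d i).2 by apply: lt_trans lt_ki.
have : (d i).2 <= p3 s d k.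
  apply: p3_ge_rival => //; first exact: truthful_ge0.
  by rewrite /norm_set leNgt pos_i tent_k setIC.
by move/(lt_le_trans (lt_trans p3_lt lt_ki)); rewrite ltxx.
Qed.

Lemma separated_for_upd d k dc i : truthful d -> i != k ->
  k \notin Qset t (upd d k dc) i (d i).1 ->
  separated_for t d i -> separated_for t (upd d k dc) i.
Proof.
move=> tr i_k k_notin; rewrite /separated_for upd_neq //; apply: le_trans.
rewrite [X in _ <= X]big_mkcond [X in X <= _]big_mkcond; apply: ler_sum => j _.
have [->|j_k] := eqVneq j k.
  by rewrite (negbTE k_notin); case: ifP => // _; apply: truthful_ge0.
by rewrite /Qset /Rset !inE !upd_neq.
Qed.

Lemma separated_upd_win d k S :
  truthful d -> separated t d ->
  final_alloc s (upd d k (undom t k S)) k != set0 ->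
  separated t (upd d k (undom t k S)).
Proof.
set d' := upd _ _ _ => tr sep win i.
have tr' : truthful d' := truthful_upd k S tr.
have [->|i_k] := eqVneq i k.
  have [_ tent_k _ p3_lt] := final_alloc_neq0 win.
  rewrite /separated_for (le_trans _ (ltW p3_lt)) //.
  exact: sum_Qset_le_p3 (truthful_ge0 tr') tent_k.
apply: separated_for_upd => //.
by move: (winner_notin_Qset tr' i_k win); rewrite /d' upd_neq.
Qed.

Lemma br_step_inv i d d' : truthful d -> separated t d ->
  br_step s t i d d' -> truthful d' /\ separated t d'.
Proof.
move=> tr sep [[[S0 gain] [S [-> best]]] | [_ ->]]; last by [].
split; first exact: truthful_upd.
apply: separated_upd_win => //; apply: utility_gt0_win.
exact: le_lt_trans (utility_ge0 i tr) (lt_le_trans gain (best S0)).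
Qed.

End Dynamics.

Theorem lemma4p3 (R : realType) (n m s : nat) (t : valuations R n m)
  (t_empty : forall i, t i set0 = 0)
  (t_mono : forall i (A B : {set 'I_m}), A \subset B -> t i A <= t i B)
  (d : profile R n m) :
  reachable s t d -> separated t d.
Proof.
move=> reach; suff [] : truthful t d /\ separated t d by [].
elim: reach => [|i d0 d1 _ [tr sep] step]; last exact: br_step_inv step.
split; first exact: truthful_empty.
by move=> i; rewrite /separated_for big1 // => j; rewrite !inE set0I eqxx.
Qed.
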